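(* Let $L$ be a normal modal logic with the finite model property. In $L\mathbf{KFr}_{lf}$, epimorphisms are stable under pullback along regular monomorphisms: if $f:W\to V$ is an epimorphism and $m:U\to V$ a regular monomorphism, then the pullback of $f$ along $m$ is an epimorphism.
   Context: $L\mathbf{KFr}_{lf}$ is the category of locally finite Kripke frames validating $L$ (each point reaches only finitely many points via finite $\prec$-paths) with p-morphisms (maps $f$ with $w\prec w'\Rightarrow f(w)\prec f(w')$ and, if $f(w)\prec v'$, some $w'\succ w$ has $f(w')=v'$). This category has all limits. *)

From Stdlib Require Import List Relations.
Import ListNotations.

Inductive form : Type :=
| Var : nat -> form
| Bot : form
| Imp : form -> form -> form
| Box : form -> form.

Definition Neg (a : form) : form := Imp a Bot.
Definition Dia (a : form) : form := Neg (Box (Neg a)).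

Fixpoint subst (s : nat -> form) (a : form) : form :=
  match a with
  | Var n => s n
  | Bot => Bot
  | Imp a b => Imp (subst s a) (subst s b)
  | Box a => Box (subst s a)
  end.

(** Propositional tautologies: formulas true under every boolean evaluation in
    which variables and boxed subformulas are treated as atoms. *)
Fixpoint beval (v : form -> bool) (a : form) : bool :=
  match a with
  | Var n => v (Var n)
  | Bot => false
  | Imp a b => orb (negb (beval v a)) (beval v b)
  | Box a => v (Box a)
  end.

Definition tautology (a : form) : Prop := forall v, beval v a = true.

Definition normal_modal_logic (L : form -> Prop) : Prop :=
  (forall a, tautology a -> L a) /\
  (forall a b, L (Imp (Box (Imp a b)) (Imp (Box a) (Box b)))) /\
  (forall a b, L a -> L (Imp a b) -> L b) /\
  (forall a, L a -> L (Box a)) /\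
  (forall s a, L a -> L (subst s a)).

Fixpoint sat {W : Type} (R : W -> W -> Prop) (V : nat -> W -> Prop)
  (w : W) (a : form) : Prop :=
  match a with
  | Var n => V n w
  | Bot => False
  | Imp a b => sat R V w a -> sat R V w b
  | Box a => forall v, R w v -> sat R V v a
  end.

Definition frame_valid {W : Type} (R : W -> W -> Prop) (a : form) : Prop :=
  forall (V : nat -> W -> Prop) (w : W), sat R V w a.

Definition frame_validates {W : Type} (R : W -> W -> Prop) (L : form -> Prop) : Prop :=
  forall a, L a -> frame_valid R a.

Definition finite_type (W : Type) : Prop := exists l : list W, forall w, In w l.

Definition fmp (L : form -> Prop) : Prop :=
  forall a, ~ L a ->
    exists (W : Type) (R : W -> W -> Prop),
      finite_type W /\ frame_validates R L /\ ~ frame_valid R a.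

Definition locally_finite {W : Type} (R : W -> W -> Prop) : Prop :=
  forall w, exists l : list W, forall v, clos_refl_trans W R w v -> In v l.

Record LKFr (L : form -> Prop) : Type := mkLKFr {
  carrier :> Type;
  rel : carrier -> carrier -> Prop;
  lf : locally_finite rel;
  validL : frame_validates rel L
}.
Arguments carrier {L} _.
Arguments rel {L} _ _ _.

Definition is_pmorphism {W V : Type} (RW : W -> W -> Prop) (RV : V -> V -> Prop)
  (f : W -> V) : Prop :=
  (forall w w', RW w w' -> RV (f w) (f w')) /\
  (forall w v', RV (f w) v' -> exists w', RW w w' /\ f w' = v').

Record pmor {L : form -> Prop} (X Y : LKFr L) : Type := mkPmor {
  pfun :> X -> Y;
  pmor_prop : is_pmorphism (rel X) (rel Y) pfun
}.
Arguments pfun {L X Y} _ _.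

Definition meq {L} {X Y : LKFr L} (f g : pmor X Y) : Prop :=
  forall x, pfun f x = pfun g x.

Definition epi {L} {W V : LKFr L} (f : pmor W V) : Prop :=
  forall (Z : LKFr L) (g h : pmor V Z),
    (forall w, g (f w) = h (f w)) -> meq g h.

Definition is_equalizer {L} {U V Z : LKFr L} (m : pmor U V) (g h : pmor V Z) : Prop :=
  (forall u, g (m u) = h (m u)) /\
  forall (T : LKFr L) (k : pmor T V),
    (forall t, g (k t) = h (k t)) ->
    exists u : pmor T U, (forall t, m (u t) = k t) /\
      forall u' : pmor T U, (forall t, m (u' t) = k t) -> meq u u'.

Definition regular_mono {L} {U V : LKFr L} (m : pmor U V) : Prop :=
  exists (Z : LKFr L) (g h : pmor V Z), is_equalizer m g h.

Definition is_pullback {L} {W V U P : LKFr L} (f : pmor W V) (m : pmor U V)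
  (p1 : pmor P U) (p2 : pmor P W) : Prop :=
  (forall x, m (p1 x) = f (p2 x)) /\
  forall (T : LKFr L) (q1 : pmor T U) (q2 : pmor T W),
    (forall t, m (q1 t) = f (q2 t)) ->
    exists u : pmor T P,
      ((forall t, p1 (u t) = q1 t) /\ (forall t, p2 (u t) = q2 t)) /\
      forall u' : pmor T P,
        (forall t, p1 (u' t) = q1 t) -> (forall t, p2 (u' t) = q2 t) -> meq u u'.

From Stdlib Require Import List Relations FinFun ProofIrrelevance ClassicalDescription.

(* Epimorphisms of L KFr_lf are surjective: any frame V maps into the frame
   obtained by doubling the complement of an upward-closed set A, by two
   p-morphisms that agree exactly on A; take A to be the image of the epi.
   Regular monomorphisms are injective, because an equalizer of g and h must
   factor through the generated subframe of points all of whose successors are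
   equalized by g and h.  The set-theoretic pullback of a surjection f along an
   injection m embeds into the domain of f, so it lies in L KFr_lf, and its first
   projection is surjective; that projection factors through p1, so p1 is
   surjective and hence epi. *)

Lemma proj1_sig_injective {A : Type} {P : A -> Prop} : Injective (@proj1_sig A P).
Proof. exact (eq_sig_hprop (fun x => proof_irrelevance (P x))). Qed.

Lemma clos_refl_trans_map {X Y : Type} (RX : X -> X -> Prop) (RY : Y -> Y -> Prop)
  (k : X -> Y) :
  (forall x x', RX x x' -> RY (k x) (k x')) ->
  forall x x', clos_refl_trans X RX x x' -> clos_refl_trans Y RY (k x) (k x').
Proof.
  intros Hk x x' Hxx'; induction Hxx'.
  - apply rt_step; auto.
  - apply rt_refl.
  - eapply rt_trans; eauto.
Qed.

Lemma clos_refl_trans_up {X : Type} (R : X -> X -> Prop) (A : X -> Prop) :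
  (forall x y, R x y -> A x -> A y) ->
  forall x y, clos_refl_trans X R x y -> A x -> A y.
Proof. intros HA x y Hxy; induction Hxy; eauto. Qed.

Lemma list_preimage_injective {X Y : Type} (k : X -> Y) :
  Injective k -> forall l : list Y, exists l' : list X, forall x, In (k x) l -> In x l'.
Proof.
  intros Hk l; induction l as [|y l [l' Hl']].
  - exists nil; simpl; tauto.
  - destruct (classic (exists x, k x = y)) as [[x0 Hx0]|Hy].
    + exists (x0 :: l'); simpl; intros x [E|E]; [left; apply Hk; congruence | auto].
    + exists l'; simpl; intros x [E|E]; [exfalso; eauto | auto].
Qed.

Section PMorphism.

Variables (X Y : Type) (RX : X -> X -> Prop) (RY : Y -> Y -> Prop) (k : X -> Y).
Hypothesis Hk : is_pmorphism RX RY k.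

Lemma sat_pmorphism (VX : nat -> X -> Prop) (VY : nat -> Y -> Prop) :
  (forall n x, VX n x <-> VY n (k x)) ->
  forall a x, sat RX VX x a <-> sat RY VY (k x) a.
Proof.
  destruct Hk as [Hforth Hback]; intros HV a.
  induction a as [n| |a IHa b IHb|a IHa]; intros x; simpl.
  - apply HV.
  - tauto.
  - rewrite IHa, IHb; tauto.
  - split.
    + intros H y Hxy. destruct (Hback x y Hxy) as [x' [Hxx' <-]].
      apply IHa, H, Hxx'.
    + intros H x' Hxx'. apply IHa, H, Hforth, Hxx'.
Qed.

Lemma pmorphism_image_up (y y' : Y) :
  RY y y' -> (exists x, k x = y) -> exists x, k x = y'.
Proof.
  intros Hyy' [x <-]. destruct (proj2 Hk x y' Hyy') as [x' [_ Hx']]. eauto.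
Qed.

End PMorphism.

Lemma is_pmorphism_id {X : Type} (R : X -> X -> Prop) : is_pmorphism R R (fun x => x).
Proof. split; eauto. Qed.

Lemma is_pmorphism_comp {X Y Z : Type} (RX : X -> X -> Prop) (RY : Y -> Y -> Prop)
  (RZ : Z -> Z -> Prop) (f : X -> Y) (g : Y -> Z) :
  is_pmorphism RX RY f -> is_pmorphism RY RZ g -> is_pmorphism RX RZ (fun x => g (f x)).
Proof.
  intros [Hf Hf'] [Hg Hg']; split; auto.
  intros x z Hxz. destruct (Hg' _ _ Hxz) as [y [Hy <-]].
  destruct (Hf' _ _ Hy) as [x' [Hx' <-]]. eauto.
Qed.

Lemma frame_validates_cover {L : form -> Prop} {X : Type} (RX : X -> X -> Prop) :
  (forall x, exists (Y : LKFr L) (k : Y -> X) (y : Y), is_pmorphism (rel Y) RX k /\ k y = x) ->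
  frame_validates RX L.
Proof.
  intros Hcover a Ha VX x. destruct (Hcover x) as [Y [k [y [Hk <-]]]].
  apply (sat_pmorphism _ _ _ _ _ Hk (fun n y => VX n (k y)) VX (fun _ _ => iff_refl _)).
  apply (validL L Y a Ha).
Qed.

Lemma frame_validates_embedding {L : form -> Prop} {X : Type} (RX : X -> X -> Prop)
  (Y : LKFr L) (k : X -> Y) :
  is_pmorphism RX (rel Y) k -> Injective k -> frame_validates RX L.
Proof.
  intros Hk Hinj a Ha VX x.
  apply (sat_pmorphism _ _ _ _ _ Hk VX (fun n y => exists x, k x = y /\ VX n x)).
  - intros n x0; split.
    + eauto.
    + intros [x1 [E H]]. apply Hinj in E. subst; auto.
  - apply (validL L Y a Ha).
Qed.

Lemma locally_finite_embedding {X Y : Type} (RX : X -> X -> Prop) (RY : Y -> Y -> Prop)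
  (k : X -> Y) :
  is_pmorphism RX RY k -> Injective k -> locally_finite RY -> locally_finite RX.
Proof.
  intros [Hk _] Hinj HY x. destruct (HY (k x)) as [l Hl].
  destruct (list_preimage_injective k Hinj l) as [l' Hl'].
  exists l'. intros x' Hxx'. apply Hl', Hl, (clos_refl_trans_map RX RY k Hk), Hxx'.
Qed.

Definition LKFr_of_embedding {L : form -> Prop} {X : Type} (RX : X -> X -> Prop)
  (Y : LKFr L) (k : X -> Y) (Hk : is_pmorphism RX (rel Y) k) (Hinj : Injective k) : LKFr L :=
  {| carrier := X;
     rel := RX;
     lf := locally_finite_embedding RX (rel Y) k Hk Hinj (lf L Y);
     validL := frame_validates_embedding RX Y k Hk Hinj |}.

Definition pmor_id {L : form -> Prop} (X : LKFr L) : pmor X X :=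
  {| pfun := fun x => x; pmor_prop := is_pmorphism_id (rel X) |}.

Definition pmor_comp {L : form -> Prop} {X Y Z : LKFr L} (f : pmor X Y) (g : pmor Y Z) :
  pmor X Z :=
  {| pfun := fun x => g (f x);
     pmor_prop := is_pmorphism_comp _ _ _ f g (pmor_prop X Y f) (pmor_prop Y Z g) |}.

Lemma epi_of_surjective {L : form -> Prop} {W V : LKFr L} (f : pmor W V) :
  Surjective f -> epi f.
Proof.
  intros Hf Z g h Hgh v. destruct (Hf v) as [w <-]. apply Hgh.
Qed.

Section Doubling.

Variables (L : form -> Prop) (V : LKFr L) (a : V -> bool).
Hypothesis a_up : forall v v', rel V v v' -> a v = true -> a v' = true.

(* [(v, true)] is the twin of a point [v] outside [a]; twins see twins outside
   [a] and original points inside [a]. *)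
Definition doubled : Type := {p : V * bool | snd p = true -> a (fst p) = false}.

Definition doubled_rel (z z' : doubled) : Prop :=
  rel V (fst (proj1_sig z)) (fst (proj1_sig z')) /\
  snd (proj1_sig z') = andb (snd (proj1_sig z)) (negb (a (fst (proj1_sig z')))).

Definition doubled_base (v : V) : doubled :=
  exist (fun p : V * bool => snd p = true -> a (fst p) = false) (v, false)
    (fun H => False_ind _ (Bool.diff_false_true H)).

Definition doubled_twin (v : V) : doubled :=
  exist (fun p : V * bool => snd p = true -> a (fst p) = false) (v, negb (a v))
    (proj1 (Bool.negb_true_iff _)).

Lemma doubled_cases (z : doubled) :
  z = doubled_base (fst (proj1_sig z)) \/ z = doubled_twin (fst (proj1_sig z)).
Proof.
  destruct z as [[v []] Hv]; simpl.
  - right. apply proj1_sig_injective; simpl. rewrite (Hv eq_refl : a v = false). reflexivity.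
  - left. apply proj1_sig_injective; reflexivity.
Qed.

Lemma twin_rel_flag (v v' : V) :
  rel V v v' -> negb (a v') = andb (negb (a v)) (negb (a v')).
Proof.
  intros Hvv'. destruct (a v) eqn:Hv; simpl; auto.
  rewrite (a_up v v' Hvv' Hv). reflexivity.
Qed.

Lemma doubled_base_pmorphism : is_pmorphism (rel V) doubled_rel doubled_base.
Proof.
  split.
  - intros v v' Hvv'. split; simpl; auto.
  - intros v [[v' b] Hv'] [Hvv' Hb]; simpl in *.
    exists v'. split; auto. apply proj1_sig_injective; simpl. congruence.
Qed.

Lemma doubled_twin_pmorphism : is_pmorphism (rel V) doubled_rel doubled_twin.
Proof.
  split.
  - intros v v' Hvv'. split; simpl; auto using twin_rel_flag.
  - intros v [[v' b] Hv'] [Hvv' Hb]; simpl in *.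
    exists v'. split; auto. apply proj1_sig_injective; simpl.
    rewrite Hb, <- twin_rel_flag; auto.
Qed.

Lemma doubled_locally_finite : locally_finite doubled_rel.
Proof.
  intros z. destruct (lf L V (fst (proj1_sig z))) as [l Hl].
  exists (map doubled_base l ++ map doubled_twin l). intros z' Hzz'.
  assert (Hv' : In (fst (proj1_sig z')) l).
  { apply Hl, (clos_refl_trans_map doubled_rel (rel V) (fun z => fst (proj1_sig z))), Hzz'.
    intros ? ? []; auto. }
  apply in_app_iff. destruct (doubled_cases z') as [E|E]; rewrite E.
  - left; apply in_map, Hv'.
  - right; apply in_map, Hv'.
Qed.

Lemma doubled_validates : frame_validates doubled_rel L.
Proof.
  apply frame_validates_cover. intros z.
  destruct (doubled_cases z) as [E|E]; exists V.
  - exists doubled_base, (fst (proj1_sig z)). split; [exact doubled_base_pmorphism | symmetry; exact E].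
  - exists doubled_twin, (fst (proj1_sig z)). split; [exact doubled_twin_pmorphism | symmetry; exact E].
Qed.

Definition Doubled : LKFr L :=
  {| carrier := doubled; rel := doubled_rel;
     lf := doubled_locally_finite; validL := doubled_validates |}.

Definition base : pmor V Doubled :=
  {| pfun := doubled_base : V -> Doubled; pmor_prop := doubled_base_pmorphism |}.

Definition twin : pmor V Doubled :=
  {| pfun := doubled_twin : V -> Doubled; pmor_prop := doubled_twin_pmorphism |}.

Lemma base_eq_twin (v : V) : base v = twin v <-> a v = true.
Proof.
  simpl. split.
  - intros E. apply (f_equal (fun z => snd (proj1_sig z))) in E; simpl in E.
    destruct (a v); auto.
  - intros Hv. apply proj1_sig_injective; simpl. rewrite Hv. reflexivity.
Qed.

End Doubling.

Lemma epi_surjective {L : form -> Prop} {W V : LKFr L} (f : pmor W V) :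
  epi f -> Surjective f.
Proof.
  intros Hf v.
  set (in_image := fun v => if excluded_middle_informative (exists w, f w = v) then true else false).
  assert (Hin : forall v, in_image v = true <-> exists w, f w = v).
  { intros v'. unfold in_image. destruct (excluded_middle_informative _); intuition discriminate. }
  assert (Hup : forall v v', rel V v v' -> in_image v = true -> in_image v' = true).
  { intros v1 v2 H12. rewrite !Hin. apply (pmorphism_image_up _ _ _ _ _ (pmor_prop W V f) _ _ H12). }
  apply Hin, (base_eq_twin L V in_image Hup).
  apply (Hf _ (base L V in_image Hup) (twin L V in_image Hup)).
  intros w. apply base_eq_twin, Hin. eauto.
Qed.

Section Equalizer.

Variables (L : form -> Prop) (V Z : LKFr L) (g h : pmor V Z).

Definition equalized : Type :=
  {v : V | forall v', clos_refl_trans V (rel V) v v' -> g v' = h v'}.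

Definition equalized_rel (e e' : equalized) : Prop := rel V (proj1_sig e) (proj1_sig e').

Lemma equalized_incl_pmorphism : is_pmorphism equalized_rel (rel V) (@proj1_sig _ _).
Proof.
  split; auto.
  intros [v Hv] v' Hvv'; simpl in *.
  unshelve eexists (exist _ v' _); [|split; [exact Hvv' | reflexivity]].
  intros v'' Hv''. apply Hv. eapply rt_trans; [apply rt_step, Hvv' | exact Hv''].
Qed.

Definition Equalizer : LKFr L :=
  LKFr_of_embedding equalized_rel V (@proj1_sig _ _)
    equalized_incl_pmorphism proj1_sig_injective.

Definition equalizer_incl : pmor Equalizer V :=
  {| pfun := @proj1_sig _ _ : Equalizer -> V; pmor_prop := equalized_incl_pmorphism |}.

Lemma equalizer_incl_equalizes (e : Equalizer) : g (equalizer_incl e) = h (equalizer_incl e).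
Proof. destruct e as [v Hv]. apply Hv, rt_refl. Qed.

Section Factor.

Variables (U : LKFr L) (m : pmor U V).
Hypothesis m_equalizes : forall u, g (m u) = h (m u).

Lemma image_equalized (u : U) :
  forall v, clos_refl_trans V (rel V) (m u) v -> g v = h v.
Proof.
  intros v Hv.
  destruct (clos_refl_trans_up (rel V) (fun v => exists u, m u = v)
              (pmorphism_image_up _ _ _ _ _ (pmor_prop U V m)) _ _ Hv (ex_intro _ u eq_refl))
    as [u' <-].
  apply m_equalizes.
Qed.

Definition equalizer_corestr (u : U) : Equalizer := exist _ (m u) (image_equalized u).

Lemma equalizer_corestr_pmorphism : is_pmorphism (rel U) (rel Equalizer) equalizer_corestr.
Proof.
  destruct (pmor_prop U V m) as [Hm Hm']. split.
  - intros u u' Huu'. apply Hm, Huu'.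
  - intros u [v' Hv'] Huv'. destruct (Hm' u v' Huv') as [u' [Huu' Hu']].
    exists u'. split; auto. apply proj1_sig_injective, Hu'.
Qed.

Definition equalizer_factor : pmor U Equalizer :=
  {| pfun := equalizer_corestr; pmor_prop := equalizer_corestr_pmorphism |}.

End Factor.

End Equalizer.

Lemma regular_mono_injective {L : form -> Prop} {U V : LKFr L} (m : pmor U V) :
  regular_mono m -> Injective m.
Proof.
  intros [Z [g [h [Hm Huniv]]]].
  set (m' := equalizer_factor L V Z g h U m Hm).
  destruct (Huniv _ (equalizer_incl L V Z g h) (equalizer_incl_equalizes L V Z g h))
    as [r [Hr _]].
  destruct (Huniv U m Hm) as [u0 [_ Hu0]].
  assert (Hretr : forall x, r (m' x) = x).
  { intros x.
    exact (eq_trans (eq_sym (Hu0 (pmor_comp m' r) (fun x => Hr (m' x)) x))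
                    (Hu0 (pmor_id U) (fun _ => eq_refl) x)). }
  intros x y Exy. rewrite <- (Hretr x), <- (Hretr y).
  f_equal. apply proj1_sig_injective, Exy.
Qed.

Section Pullback.

Variables (L : form -> Prop) (W V U : LKFr L) (f : pmor W V) (m : pmor U V).
Hypothesis m_injective : Injective m.

Definition fibred : Type := {p : U * W | m (fst p) = f (snd p)}.

Definition fibred_fst (t : fibred) : U := fst (proj1_sig t).
Definition fibred_snd (t : fibred) : W := snd (proj1_sig t).

Definition fibred_rel (t t' : fibred) : Prop :=
  rel U (fibred_fst t) (fibred_fst t') /\ rel W (fibred_snd t) (fibred_snd t').

Lemma fibred_fst_pmorphism : is_pmorphism fibred_rel (rel U) fibred_fst.
Proof.
  split; [intros t t' []; auto|].
  intros [[u w] Huw] u' Huu'; unfold fibred_fst in *; simpl in *.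
  assert (Hfw : rel V (f w) (m u')) by (rewrite <- Huw; apply (pmor_prop U V m), Huu').
  destruct (proj2 (pmor_prop W V f) w _ Hfw) as [w' [Hww' Hw']].
  exists (exist _ (u', w') (eq_sym Hw')). repeat split; auto.
Qed.

Lemma fibred_snd_pmorphism : is_pmorphism fibred_rel (rel W) fibred_snd.
Proof.
  split; [intros t t' []; auto|].
  intros [[u w] Huw] w' Hww'; unfold fibred_snd in *; simpl in *.
  assert (Hmu : rel V (m u) (f w')) by (rewrite Huw; apply (pmor_prop W V f), Hww').
  destruct (proj2 (pmor_prop U V m) u _ Hmu) as [u' [Huu' Hu']].
  exists (exist _ (u', w') Hu'). repeat split; auto.
Qed.

Lemma fibred_snd_injective : Injective fibred_snd.
Proof.
  intros [[u w] Huw] [[u' w'] Huw'] E; unfold fibred_snd in E; simpl in *. subst w'.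
  apply proj1_sig_injective; simpl. f_equal. apply m_injective. congruence.
Qed.

Definition Fibred : LKFr L :=
  LKFr_of_embedding fibred_rel W fibred_snd fibred_snd_pmorphism fibred_snd_injective.

Definition fibred_fst_pmor : pmor Fibred U :=
  {| pfun := fibred_fst : Fibred -> U; pmor_prop := fibred_fst_pmorphism |}.

Definition fibred_snd_pmor : pmor Fibred W :=
  {| pfun := fibred_snd : Fibred -> W; pmor_prop := fibred_snd_pmorphism |}.

Lemma fibred_fst_surjective : Surjective f -> Surjective fibred_fst.
Proof.
  intros Hf u. destruct (Hf (m u)) as [w Hw].
  exists (exist _ (u, w) (eq_sym Hw)). reflexivity.
Qed.

Lemma pullback_fst_surjective (P : LKFr L) (p1 : pmor P U) (p2 : pmor P W) :
  is_pullback f m p1 p2 -> Surjective f -> Surjective p1.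
Proof.
  intros [_ Huniv] Hf u.
  destruct (Huniv Fibred fibred_fst_pmor fibred_snd_pmor (fun t => proj2_sig t))
    as [x [[Hx1 _] _]].
  destruct (fibred_fst_surjective Hf u) as [t <-].
  exists (x t). apply Hx1.
Qed.

End Pullback.

Theorem proposition5p11 (L : form -> Prop)
  (HL : normal_modal_logic L) (Hfmp : fmp L)
  (W V U : LKFr L) (f : pmor W V) (m : pmor U V)
  (Hf : epi f) (Hm : regular_mono m)
  (P : LKFr L) (p1 : pmor P U) (p2 : pmor P W)
  (Hpb : is_pullback f m p1 p2) :
  epi p1.
Proof.
  apply epi_of_surjective.
  apply (pullback_fst_surjective L W V U f m (regular_mono_injective m Hm) P p1 p2 Hpb).
  apply epi_surjective, Hf.
Qed.
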